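(* For any deterministic eviction heuristic $h$ and any $N$ and memory budget $B \le N$, there exists an $N$-node network (computation graph) on which DTR using heuristic $h$ with budget $B$ requires $\Omega(N/B)$ times more tensor computations than an optimal static checkpointing algorithm with the same budget.
   Context: A network is a directed acyclic computation graph whose nodes are tensors; each tensor is either a constant or produced by a pure operator applied to its parent tensors. Every tensor occupies one unit of memory and every operator application costs one unit (one tensor computation). DTR (Dynamic Tensor Rematerialization) with memory budget $B$ is an online algorithm: the network's operations are presented one at a time in a given order, and DTR must perform each one when presented, without knowledge of future operations. To perform an operation, its inputs must be resident; evicted inputs are rematerialized by recursively re-executing their producing operations. When memory is full, DTR evicts the resident (evictable) tensor chosen by the heuristic; a deterministic heuristic's choice depends only on the portion of the graph revealed so far and the execution history. Tensors with no producing operation (e.g. the input) can never be evicted. A static checkpointing algorithm sees the whole graph in advance and may compute the tensors in any order consistent with dependencies, choosing which tensors to keep or recompute, subject to the same memory budget $B$; both must compute every tensor of the network. The cost of an algorithm is its total number of tensor computations, including rematerializations. *)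

From HB Require Import structures.
From mathcomp Require Import all_boot.
Set Implicit Arguments. Unset Strict Implicit. Unset Printing Implicit Defensive.

(* Node i is
   - [None]      : a constant tensor (no producing operation), or
   - [Some ps]   : produced by a pure operator applied to the parent tensors ps.
   Nodes are indexed in the order in which they are presented to DTR;
   well-formedness requires parents to come earlier (so the graph is a DAG
   and the presentation order is consistent with dependencies). *)
Definition net := seq (option (seq nat)).

Definition wf_net (G : net) : Prop :=
  forall i ps, i < size G -> nth None G i = Some ps -> all (fun p => p < i) ps.

Definition parents (G : net) (v : nat) : seq nat := odflt [::] (nth None G v).
Definition is_const (G : net) (v : nat) : bool := nth None G v == None.

Inductive event := EComp of nat | EEvict of nat.
Definition event_to (e : event) : nat + nat :=
  match e with EComp v => inl v | EEvict v => inr v end.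
Definition event_of (x : nat + nat) : event :=
  match x with inl v => EComp v | inr v => EEvict v end.
Lemma event_toK : cancel event_to event_of. Proof. by case. Qed.
HB.instance Definition _ := Equality.copy event (can_type event_toK).

(* A deterministic eviction heuristic: its choice is a function of the revealed
   portion of the network (the presented prefix), the execution history so far,
   and the list of currently evictable resident tensors (itself determined by
   the former two). An out-of-range answer is replaced by the first candidate. *)
Definition heuristic := net -> seq event -> seq nat -> nat.

Record dstate := DState { res : seq nat; hist : seq event; cost : nat }.

Section DTR.
Variables (h : heuristic) (G : net) (B : nat).

Definition choose (rev : net) (hs : seq event) (cands : seq nat) : nat :=
  let c := h rev hs cands in if c \in cands then c else head 0 cands.

Fixpoint make_room (fuel : nat) (rev : net) (locked : seq nat) (st : dstate)
  : option dstate :=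
  if size (res st) < B then Some st else
  match fuel with
  | 0 => None
  | f.+1 =>
    let cands := [seq x <- res st | ~~ is_const G x & x \notin locked] in
    if cands is [::] then None else
    let v := choose rev (hist st) cands in
    make_room f rev locked
      (DState (rem v (res st)) (rcons (hist st) (EEvict v)) (cost st))
  end.

Definition alloc rev locked st := make_room (size (res st)) rev locked st.

(* Ensure tensor v is resident, recursively (re)materialising evicted inputs.
   The inputs of all pending operations on the recursion stack are locked. *)
Fixpoint ensure (fuel : nat) (rev : net) (locked : seq nat) (v : nat) (st : dstate)
  : option dstate :=
  match fuel with
  | 0 => None
  | f.+1 =>
    if v \in res st then Some st else
    match nth None G v with
    | None => None
    | Some ps =>
      let L := ps ++ locked in
      let st1 := foldl (fun acc p => obind (ensure f rev L p) acc) (Some st) ps in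
      obind (fun st2 =>
        obind (fun st3 =>
          Some (DState (v :: res st3) (rcons (hist st3) (EComp v)) (cost st3).+1))
          (alloc rev L st2)) st1
    end
  end.

Definition present (i : nat) (st : dstate) : option dstate :=
  let rev := take i.+1 G in
  match nth None G i with
  | None => obind (fun st' =>
              Some (DState (i :: res st') (rcons (hist st') (EComp i)) (cost st')))
              (alloc rev [::] st)
  | Some _ => ensure (size G).+1 rev [::] i st
  end.

Definition dtr_run : option dstate :=
  foldl (fun acc i => obind (present i) acc) (Some (DState [::] [::] 0)) (iota 0 (size G)).

(* total number of tensor computations (operator applications, including
   rematerialisations) performed by DTR; None if DTR gets stuck *)
Definition dtr_cost : option nat := omap cost dtr_run.

End DTR.

(* Static checkpointing: a schedule is a sequence of compute/free events,
   chosen with full knowledge of the graph. *)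
Fixpoint static_ok (G : net) (B : nat) (r : seq nat) (s : seq event) : bool :=
  match s with
  | [::] => true
  | EComp v :: s' =>
      [&& v < size G, all (fun p => p \in r) (parents G v),
          size (undup (v :: r)) <= B & static_ok G B (undup (v :: r)) s']
  | EEvict v :: s' =>
      [&& v \in r, ~~ is_const G v & static_ok G B (rem v r) s']
  end.

Definition static_valid (B : nat) (G : net) (s : seq event) : Prop :=
  static_ok G B [::] s /\ forall v, v < size G -> EComp v \in s.

Definition static_cost (G : net) (s : seq event) : nat :=
  count (fun e => if e is EComp v then ~~ is_const G v else false) s.

From Pilot Require Import Defs.
From mathcomp Require Import all_boot.
From mathcomp Require Import zify.
Set Implicit Arguments. Unset Strict Implicit. Unset Printing Implicit Defensive.

(* The network is a chain 0 -> 1 -> ... -> L-1 with L = N/2, followed by N - L query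
   nodes, each with a single parent on the chain.  Cut the chain into B+1 blocks of length
   s = L/(B+1).  DTR holds at most B tensors, so before each query some block has no
   resident tensor; the query asks for the last node of that block, and DTR must recompute
   the whole block, paying at least s per query, about N^2/(4(B+1)) in total.  As the
   heuristic is deterministic and DTR is online, the network can be built query by query
   by simulating DTR on the part built so far.  A static schedule instead walks the chain
   once, keeping only the current chain node, and serves every query right after its
   parent: each node is computed once, with two tensors in memory. *)

Definition unary_net (G : net) : Prop :=
  forall i, i < size G -> exists2 ps, nth None G i = Some ps &
    ps = [::] \/ exists2 p, ps = [:: p] & p < i.

(* DTR must recompute each node counted here to make [v] resident. *)
Fixpoint remat_depth (G : net) (f : nat) (r : seq nat) (v : nat) : nat :=
  if f is f'.+1 then
    if v \in r then 0 else
    if parents G v is p :: _ then (remat_depth G f' r p).+1 else 1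
  else 0.

Lemma uniq_exists_neq (T : eqType) (r : seq T) (p : T) :
  uniq r -> 1 < size r -> exists2 x, x \in r & x != p.
Proof.
move=> ur r2; have /hasP [x xr xp] : has (predC1 p) r; last by exists x.
rewrite has_predC; apply: contraL r2 => /allP rp; rewrite -leqNgt.
by apply: (uniq_leq_size (s2 := [:: p]) ur) => x /rp /eqP ->; rewrite mem_seq1.
Qed.

Lemma unary_wf_net G : unary_net G -> wf_net G.
Proof.
move=> unG i ps iG E; have [ps' E' hps] := unG i iG.
by move: E' hps; rewrite E => -[<-] [->|[p -> pi]] //=; rewrite pi.
Qed.

Section DtrOnUnaryNets.
Variables (h : heuristic) (G : net) (B : nat).
Hypotheses (unG : unary_net G) (B2 : 2 <= B).

Lemma unary_nonconst x : x < size G -> ~~ is_const G x.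
Proof. by move=> /unG [ps E _]; rewrite /is_const E. Qed.

Lemma make_room_spec fuel rev Lk p st :
  uniq (res st) -> all (fun x => x < size G) (res st) -> size (res st) < fuel + B ->
  (forall x, x \in Lk -> x \in res st -> x = p) ->
  exists2 st', make_room h G B fuel rev Lk st = Some st' &
    [/\ uniq (res st'), {subset res st' <= res st}, size (res st') < B &
        cost st' = cost st].
Proof.
elim: fuel st => [|f IH] [r hs c] /= ur ar sz lk.
  by rewrite add0n in sz; rewrite sz; exists (DState r hs c); split.
case: ltnP => full; first by exists (DState r hs c); split.
(* only [p] may be both locked and resident, and memory holds [B >= 2] tensors *)
have [x xr xp] := uniq_exists_neq p ur (leq_trans B2 full).
have xc : x \in [seq y <- r | ~~ is_const G y & y \notin Lk].
  rewrite mem_filter xr andbT unary_nonconst ?(allP ar) //=.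
  by apply: contra xp => /lk /(_ xr) ->.
case Ec: [seq y <- r | _] xc => [|c0 cs] // _.
set v := Defs.choose _ _ _ _.
have : v \in c0 :: cs by rewrite /v /Defs.choose; case: ifP => // _; rewrite inE eqxx.
rewrite -Ec mem_filter => /andP [_ vr].
have [|||st' -> [u' s' z' c']] :=
  IH (DState (rem v r) (rcons hs (EEvict v)) c) (rem_uniq _ ur).
- by apply/allP => y /mem_rem /(allP ar).
- by rewrite /= size_rem //; change ((@size nat r).-1 < f + B); lia.
- by move=> y yL /mem_rem; apply: lk.
by exists st' => //; split=> // y /s' /mem_rem.
Qed.

Lemma alloc_push rev Lk p v st :
  uniq (res st) -> all (fun x => x < size G) (res st) -> size (res st) <= B ->
  v \notin res st -> (forall x, x \in Lk -> x \in res st -> x = p) ->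
  exists2 st', obind (fun st3 => Some (DState (v :: res st3) (rcons (hist st3) (EComp v))
                                              (cost st3).+1))
                     (alloc h G B rev Lk st) = Some st' &
    [/\ uniq (res st'), size (res st') <= B, v \in res st',
        {subset res st' <= v :: res st} & cost st' = (cost st).+1].
Proof.
move=> ur ar sz vr lk; rewrite /alloc.
have [|st3 -> [u3 s3 z3 c3]] := make_room_spec (fuel := size (res st)) rev ur ar _ lk.
  by lia.
eexists; first reflexivity.
split=> /=; rewrite ?inE ?eqxx ?c3 //.
- by rewrite u3 andbT; apply: contra vr => /s3.
- by move=> x; rewrite !inE => /predU1P [->|/s3 ->]; rewrite ?eqxx ?orbT.
Qed.

Lemma ensure_spec f rev Lk v st :
  v < f -> v < size G -> uniq (res st) -> all (fun x => x < size G) (res st) ->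
  size (res st) <= B -> (forall x, x \in Lk -> v <= x /\ (x \in res st -> x = v)) ->
  exists2 st', ensure h G B f rev Lk v st = Some st' &
    [/\ uniq (res st'), size (res st') <= B, v \in res st',
        {subset res st' <= [pred x | (x \in res st) || (x <= v)]} &
        cost st + remat_depth G f (res st) v <= cost st'].
Proof.
elim: f v st Lk => [|f IH] v st Lk //= vf vG ur ar sz lk.
case: (boolP (v \in res st)) => vin.
  by exists st; split; rewrite ?addn0 // => x xr; rewrite inE xr.
have lk_out x : x \in Lk -> x \notin res st.
  by move=> xL; apply: contra vin => xr; have [_ <-] := lk x xL.
have [ps Eps hps] := unG vG; rewrite /parents Eps; case: hps => [->|[p -> pv]] /=.
  have [|st' -> [u' z' v' s' c']] := alloc_push rev (Lk := Lk) (p := v) ur ar sz vin.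
    by move=> x /lk_out /negP nx /nx.
  exists st' => //; split=> //; last by rewrite c' addn1.
  by move=> x /s' /predU1P [->|xr]; apply/orP; [right|left].
have lk2 x : x \in p :: Lk -> p <= x /\ (x \in res st -> x = p).
  rewrite inE => /predU1P [-> //|xL]; split; first by have [] := lk x xL; lia.
  by move=> xr; case/negP: (lk_out x xL).
have pf : p < f by lia.
have [st2 -> [u2 z2 p2 s2 c2]] := IH p st (p :: Lk) pf (ltn_trans pv vG) ur ar sz lk2.
have a2 : all (fun x => x < size G) (res st2).
  by apply/allP => x /s2 /orP [/(allP ar) //|]; lia.
have lk3 x : x \in p :: Lk -> x \in res st2 -> x = p.
  rewrite inE => /predU1P [//|xL] /s2 /orP [xr|xp]; first by case/negP: (lk_out x xL).
  by have [] := lk x xL; lia.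
have v2 : v \notin res st2 by apply/negP => /s2 /orP [|]; [apply/negP | lia].
have [st' /= -> [u' z' v' s' c']] := alloc_push rev u2 a2 z2 v2 lk3.
exists st' => //; split=> //; last by lia.
by move=> x /s' /predU1P [->|/s2 /orP [xr|xp]]; apply/orP; [right|left|right] => //; lia.
Qed.

Lemma present_spec i st :
  i < size G -> uniq (res st) -> all (fun x => x < i) (res st) -> size (res st) <= B ->
  exists2 st', present h G B i st = Some st' &
    [/\ uniq (res st'), all (fun x => x < i.+1) (res st'), size (res st') <= B &
        cost st + remat_depth G (size G).+1 (res st) i <= cost st'].
Proof.
move=> iG ur ar sz; have [ps Eps _] := unG iG.
have ar' : all (fun x => x < size G) (res st) by apply/allP => x /(allP ar); lia.
have iG1 : i < (size G).+1 by lia.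
have [//|st' E [u' z' _ s' c']] :=
  ensure_spec (take i.+1 G) (Lk := [::]) iG1 iG ur ar' sz.
exists st'; first by rewrite /present Eps.
by split=> //; apply/allP => x /s' /orP [/(allP ar)|]; lia.
Qed.

End DtrOnUnaryNets.

Definition dtr_upto (h : heuristic) (G : net) (B q : nat) : option dstate :=
  foldl (fun acc i => obind (present h G B i) acc) (Some (DState [::] [::] 0)) (iota 0 q).

Lemma dtr_uptoS h G B q :
  dtr_upto h G B q.+1 = obind (present h G B q) (dtr_upto h G B q).
Proof. by rewrite /dtr_upto -addn1 iotaD foldl_cat. Qed.

Lemma dtr_cost_upto h G B : dtr_cost h G B = omap cost (dtr_upto h G B (size G)).
Proof. by []. Qed.

Lemma unary_is_constE G x : unary_net G -> is_const G x = (size G <= x).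
Proof.
move=> unG; case: (ltnP x (size G)) => xG; first exact/negbTE/unary_nonconst.
by rewrite /is_const nth_default.
Qed.

Section OnlinePrefix.
Variables (h : heuristic) (G1 G2 : net) (B q : nat).
Hypotheses (un1 : unary_net G1) (un2 : unary_net G2) (eq_size : size G1 = size G2)
  (eq_prefix : forall i, i < q -> nth None G1 i = nth None G2 i).

Lemma make_room_prefix fuel rev Lk st :
  make_room h G1 B fuel rev Lk st = make_room h G2 B fuel rev Lk st.
Proof.
elim: fuel st => [|f IH] st //=.
rewrite (eq_filter (a2 := fun x => ~~ is_const G2 x && (x \notin Lk))); last first.
  by move=> x; rewrite !unary_is_constE // eq_size.
by case: ifP => // _; case: [seq _ <- _ | _].
Qed.

Lemma ensure_prefix f rev Lk v st : v < q ->
  ensure h G1 B f rev Lk v st = ensure h G2 B f rev Lk v st.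
Proof.
elim: f v st Lk => [|f IH] v st Lk //= vq.
case: ifP => // _; rewrite -eq_prefix //.
case E: (nth None G1 v) => [ps|] //.
have vG : v < size G1 by case: ltnP => // vG; move: E; rewrite nth_default.
have [ps' E' hps] := un1 vG; move: E' hps; rewrite E => -[<-] [->|[p -> pv]] /=.
  by rewrite /alloc make_room_prefix.
rewrite IH; last exact: ltn_trans vq.
by case: ensure => //= st2; rewrite /alloc make_room_prefix.
Qed.

Lemma present_prefix i st : i < q -> present h G1 B i st = present h G2 B i st.
Proof.
move=> iq; rewrite /present.
have -> : take i.+1 G1 = take i.+1 G2.
  apply: (@eq_from_nth _ None); first by rewrite !size_take eq_size.
  by move=> j; rewrite size_take_min => ji; rewrite !nth_take ?eq_prefix //; lia.
rewrite eq_prefix // eq_size.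
case: (nth None G2 i) => [ps|]; last by rewrite /alloc make_room_prefix.
exact: ensure_prefix.
Qed.

Lemma dtr_upto_prefix q' : q' <= q -> dtr_upto h G1 B q' = dtr_upto h G2 B q'.
Proof.
elim: q' => [|q' IH] qq //.
by rewrite !dtr_uptoS IH ?(ltnW qq) //; case: dtr_upto => //= st; apply: present_prefix.
Qed.

End OnlinePrefix.

Lemma sum_count_fibers (T : eqType) (js : seq nat) (qs : seq T) (g : T -> nat) :
  uniq js -> {in qs, forall q, g q \in js} ->
  \sum_(j <- js) count (fun q => g q == j) qs = size qs.
Proof.
move=> ujs gjs; under eq_bigr => j _ do rewrite -sum1_count.
rewrite (exchange_big_dep predT) //= -sum1_size big_seq [RHS]big_seq.
apply: eq_bigr => q qin; rewrite sum1_count (@eq_count _ _ (pred1 (g q))) => [|j].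
  by rewrite count_uniq_mem // gjs.
by rewrite /= eq_sym.
Qed.

Definition chain_with_queries (G : net) (L : nat) : Prop :=
  [/\ forall v, v < size G -> ~~ is_const G v,
      forall j, j < L -> parents G j = if j is j'.+1 then [:: j'] else [::] &
      forall q, L <= q < size G -> exists2 p, parents G q = [:: p] & p < L].

Section StaticSchedule.
Variables (G : net) (L B : nat).
Hypotheses (B2 : 2 <= B) (LG : L <= size G) (GL : chain_with_queries G L).
Local Notation N := (size G).

Definition query_parent (q : nat) : nat := head 0 (parents G q).

Definition queries_of (j : nat) : seq nat :=
  [seq q <- iota L (N - L) | query_parent q == j].

Definition serve (qs : seq nat) : seq event :=
  flatten [seq [:: EComp q; EEvict q] | q <- qs].

Definition chain_step (j : nat) : seq event :=
  EComp j :: (if j is j'.+1 then [:: EEvict j'] else [::]) ++ serve (queries_of j).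

Definition static_sched : seq event := flatten [seq chain_step j | j <- iota 0 L].

Lemma parents_query q : L <= q < N ->
  parents G q = [:: query_parent q] /\ query_parent q < L.
Proof. by move=> qr; rewrite /query_parent; case: GL => _ _ /(_ q qr) [p -> pL]. Qed.

Lemma static_ok_serve j qs rest : j < L ->
  all (fun q => (L <= q < N) && (query_parent q == j)) qs ->
  static_ok G B [:: j] (serve qs ++ rest) = static_ok G B [:: j] rest.
Proof.
case: GL => nonconstG _ _ jL.
elim: qs => [|q qs IH] //= /andP [/andP [qrange /eqP qj] aq].
have [pq _] := parents_query qrange.
have qj' : (q == j) = false by apply/negbTE/eqP; lia.
have qN : q < N by case/andP: qrange.
by rewrite qN pq qj !inE qj' /= !inE !eqxx B2 nonconstG // IH.
Qed.

Lemma queries_ofP j : all (fun q => (L <= q < N) && (query_parent q == j)) (queries_of j).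
Proof. by apply/allP => q; rewrite /queries_of mem_filter mem_iota subnKC // andbC. Qed.

Lemma static_ok_chain n j : j + n = L ->
  static_ok G B (if j is j'.+1 then [:: j'] else [::])
    (flatten [seq chain_step i | i <- iota j n]).
Proof.
case: GL => nonconstG chainG _.
elim: n j => [|n IH] j jn //=.
have jL : j < L by lia.
have jN : j < N by lia.
rewrite /chain_step -catA chainG // jN.
case: j jL jn jN => [|j] jL jn jN /=.
  by rewrite (ltnW B2) static_ok_serve ?queries_ofP //; apply: (IH 1).
have jj : (j.+1 == j) = false by rewrite gtn_eqF.
rewrite !inE jj /= !inE eqxx jj B2 nonconstG ?(ltnW jN) //=.
by rewrite orbT static_ok_serve ?queries_ofP //; apply: (IH j.+2); rewrite -jn addnS.
Qed.

Lemma static_sched_valid : static_valid B G static_sched.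
Proof.
split=> [|v vN]; first exact: (@static_ok_chain L 0).
apply/flatten_mapP; case: (ltnP v L) => vL.
  by exists v; rewrite ?mem_iota ?inE ?eqxx.
have vq : L <= v < N by rewrite vL.
exists (query_parent v); first by rewrite mem_iota; case: (parents_query vq).
rewrite /chain_step inE mem_cat; apply/orP; right; apply/orP; right.
apply/flatten_mapP; exists v; last by rewrite inE eqxx.
by rewrite mem_filter eqxx mem_iota subnKC.
Qed.

Definition is_comp (e : event) : bool := if e is EComp _ then true else false.

Lemma count_is_comp_serve qs : count is_comp (serve qs) = size qs.
Proof. by elim: qs => //= q qs ->. Qed.

Lemma static_sched_cost : static_cost G static_sched <= N.
Proof.
apply: (@leq_trans (count is_comp static_sched)); first by apply: sub_count => -[].
rewrite /static_sched count_flatten -map_comp sumnE big_map.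
under eq_bigr => j _ do rewrite /= count_cat count_is_comp_serve size_filter.
rewrite big_split big_split /= sum1_size big1 => [|[|j] //].
rewrite sum_count_fibers ?iota_uniq ?size_iota ?addn0 ?subnKC // => q.
by rewrite !mem_iota subnKC // => /parents_query [_ ->].
Qed.

End StaticSchedule.

Definition block_free (s : nat) (r : seq nat) (k : nat) : bool :=
  ~~ has (fun x => k * s <= x < k.+1 * s) r.

Lemma has_block_free s n r : 0 < s -> size r < n -> has (block_free s r) (iota 0 n).
Proof.
move=> s0 rn; apply/negPn/negP => /hasPn busy.
have sub : {subset iota 0 n <= [seq x %/ s | x <- r]}.
  move=> k /busy; rewrite negbK => /hasP [x xr /andP [lo hi]].
  apply/mapP; exists x => //; apply/eqP.
  by rewrite eq_sym eqn_leq leq_divRL // lo -ltnS ltn_divLR // hi.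
by have := uniq_leq_size (iota_uniq 0 n) sub; rewrite size_iota size_map; lia.
Qed.

Section Adversary.
Variables (h : heuristic) (N B : nat).

Definition chain_len := N %/ 2.
Definition block_len := chain_len %/ B.+1.
Local Notation L := chain_len.
Local Notation s := block_len.

Definition chain_net : net :=
  mkseq (fun j => Some (if 0 < j < L then [:: j.-1] else [::])) N.

(* The last node of the first block of the chain holding no tensor of [r]; the [minn]
   only matters when there is no such block, which never happens for [size r <= B]. *)
Definition free_block_end (r : seq nat) : nat :=
  minn L.-1 ((find (block_free s r) (iota 0 B.+1)).+1 * s).-1.

(* Query [L + t'] gets its parent by simulating DTR on the network built so far; the
   [odflt [::]] only matters if DTR were stuck, which never happens. *)
Fixpoint adv_net (t : nat) : net :=
  if t is t'.+1 then
    let st := dtr_upto h (adv_net t') B (L + t') in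
    set_nth None (adv_net t') (L + t') (Some [:: free_block_end (odflt [::] (omap res st))])
  else chain_net.

Definition adv_final : net := adv_net (N - L).

Lemma size_adv_net t : t <= N - L -> size (adv_net t) = N.
Proof.
by elim: t => [|t IH] tN /=; [rewrite size_mkseq | rewrite size_set_nth IH; lia].
Qed.

Lemma size_adv_final : size adv_final = N.
Proof. exact: size_adv_net. Qed.

Lemma nth_adv_net_stable t t' i : t <= t' -> i < L + t ->
  nth None (adv_net t') i = nth None (adv_net t) i.
Proof.
elim: t' => [|t' IH] tt iL; first by have -> : t = 0 by lia.
have [-> //|ne] := eqVneq t t'.+1.
by rewrite /= nth_set_nth /= ifN_eq; [apply: IH | apply/eqP]; lia.
Qed.

Lemma nth_adv_net_chain t i : i < L ->
  nth None (adv_net t) i = Some (if 0 < i then [:: i.-1] else [::]).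
Proof.
move=> iL; rewrite (@nth_adv_net_stable 0 t) ?addn0 //= nth_mkseq ?iL ?andbT //.
exact: leq_trans iL (leq_div N 2).
Qed.

Lemma nth_adv_net_rest t i : L + t <= i < N -> nth None (adv_net t) i = Some [::].
Proof.
elim: t => [|t IH] /andP [ti iN] /=; first by rewrite nth_mkseq //; case: ifP => //; lia.
by rewrite nth_set_nth /= ifN_eq; [apply: IH | apply/eqP]; lia.
Qed.

Lemma nth_adv_net_query t t' : t < t' ->
  nth None (adv_net t') (L + t) =
  Some [:: free_block_end (odflt [::] (omap res (dtr_upto h (adv_net t) B (L + t))))].
Proof.
by move=> tt; rewrite (@nth_adv_net_stable t.+1 t') ?addnS //= nth_set_nth /= eqxx.
Qed.

Hypotheses (B2 : 2 <= B) (BN : B <= N).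

Lemma chain_len_gt0 : 0 < L. Proof. rewrite /L; lia. Qed.
Lemma chain_len_lt : L < N. Proof. rewrite /L; lia. Qed.

Lemma free_block_end_lt r : free_block_end r < L.
Proof. have := chain_len_gt0; rewrite /free_block_end; lia. Qed.

Lemma free_block_end_spec r : size r <= B -> 0 < s ->
  s <= (free_block_end r).+1 /\
  forall x, (free_block_end r).+1 - s <= x <= free_block_end r -> x \notin r.
Proof.
move=> rB s0; have free := has_block_free (n := B.+1) s0 rB.
set k := find (block_free s r) (iota 0 B.+1).
have kB : k < B.+1 by move: free; rewrite has_find size_iota.
have /hasPn kfree : block_free s r k by have := nth_find 0 free; rewrite nth_iota.
have kL : k.+1 * s <= L.
  by apply: leq_trans (leq_divM L B.+1); rewrite mulnC leq_mul2l kB orbT.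
have -> : free_block_end r = k * s + s - 1 by rewrite /free_block_end mulSn; lia.
split=> [|x /andP [lo hi]]; first by lia.
by apply/negP => /kfree /negP; apply; rewrite mulSn; apply/andP; lia.
Qed.

Lemma unary_adv_net t : t <= N - L -> unary_net (adv_net t).
Proof.
move=> tN i; rewrite size_adv_net // => iN.
case: (ltnP i L) => iL.
  rewrite nth_adv_net_chain //; eexists; first reflexivity.
  by case: i iL {iN} => [|i] iL; [left | right; exists i].
case: (ltnP i (L + t)) => it; last by rewrite nth_adv_net_rest ?it //; eexists; [|left].
rewrite -(subnKC iL) nth_adv_net_query; last by lia.
eexists; first reflexivity; right; eexists; first reflexivity.
by rewrite subnKC // (leq_trans (free_block_end_lt _)).
Qed.

Lemma unary_adv_final : unary_net adv_final.
Proof. exact: unary_adv_net. Qed.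

Lemma adv_final_query q st : L <= q < N -> dtr_upto h adv_final B q = Some st ->
  nth None adv_final q = Some [:: free_block_end (res st)].
Proof.
case/andP=> Lq qN Est; rewrite -(subnKC Lq) nth_adv_net_query; last by lia.
have tN : q - L <= N - L by lia.
rewrite (@dtr_upto_prefix h _ adv_final B (L + (q - L))) ?subnKC ?Est //.
- exact: unary_adv_net.
- exact: unary_adv_final.
- by rewrite size_adv_net ?size_adv_final.
by move=> i iq; rewrite /adv_final (@nth_adv_net_stable (q - L)) //; lia.
Qed.

Lemma chain_with_queries_adv_final : chain_with_queries adv_final L.
Proof.
split=> [v|j jL|q /andP [Lq qN]].
- exact/unary_nonconst/unary_adv_final.
- by rewrite /parents nth_adv_net_chain //; case: j jL.
rewrite size_adv_final in qN.
rewrite /parents /adv_final -(subnKC Lq) nth_adv_net_query; last by lia.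
by eexists; first reflexivity; exact: free_block_end_lt.
Qed.

End Adversary.

Section DtrLowerBound.
Variables (h : heuristic) (N B : nat).
Hypotheses (B2 : 2 <= B) (BN : B <= N).
Local Notation L := (chain_len N).
Local Notation s := (block_len N B).
Local Notation G := (adv_final h N B).

Lemma remat_depth_chain n j f r : j < L -> n <= j.+1 -> j < f ->
  (forall x, j.+1 - n <= x <= j -> x \notin r) -> n <= remat_depth G f r j.
Proof.
elim: n j f r => [|n IH] j [|f] r //= jL nj jf fr.
rewrite (negbTE (fr j _)); last by lia.
rewrite /parents nth_adv_net_chain //=.
case: j jL nj jf fr => [|j] jL nj jf fr //=.
by rewrite ltnS; apply: IH => [||| x xj]; [lia | lia | lia | apply: fr; lia].
Qed.

Lemma remat_depth_free_block r :
  size r <= B -> s <= remat_depth G N r (free_block_end N B r).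
Proof.
move=> rB; have [-> //|s0] := posnP s.
have [s_le free] := free_block_end_spec B2 BN rB s0.
have := free_block_end_lt B2 BN r; have := chain_len_lt B2 BN.
by move=> LN end_lt; apply: remat_depth_chain => //; lia.
Qed.

Lemma dtr_upto_adv_final q : q <= N ->
  exists2 st, dtr_upto h G B q = Some st &
    [/\ uniq (res st), all (fun x => x < q) (res st), size (res st) <= B &
        q + (q - L) * s <= cost st].
Proof.
elim: q => [|q IH] qN; first by exists (DState [::] [::] 0).
have [st Est [u a z c]] := IH (ltnW qN).
have qG : q < size G by rewrite size_adv_final.
have [st' Est' [u' a' z' c']] :=
  present_spec h (unary_adv_final (h := h) B2 BN) B2 qG u a z.
exists st'; first by rewrite dtr_uptoS Est.
split=> //; move: c'; rewrite size_adv_final /=.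
have /negbTE -> : q \notin res st by apply/negP => /(allP a); rewrite ltnn.
case: (ltnP q L) => qL.
  have -> : q.+1 - L = 0 by lia.
  by case: parents => [|p ps]; lia.
rewrite /parents (adv_final_query B2 BN _ Est) /=; last by rewrite qL.
by rewrite subSn // mulSn; have := remat_depth_free_block z; lia.
Qed.

End DtrLowerBound.

Lemma sq_le_cost N B L s d : 2 <= B -> 2 * L <= N -> N <= (2 * L).+1 ->
  L < s.+1 * B.+1 -> N + (N - L) * s <= d -> N * N <= 6 * B * d.
Proof.
move=> B2 LN NL Ls Nd.
have Nsd : N * s.+1 <= 2 * d.
  have : N * s <= 2 * ((N - L) * s) by rewrite mulnA leq_mul2r; lia.
  by rewrite mulnS; lia.
have NsB : N <= 2 * (s.+1 * B.+1) by lia.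
apply: leq_trans (leq_mul (leqnn N) NsB) _.
have -> : N * (2 * (s.+1 * B.+1)) = 2 * B.+1 * (N * s.+1) by lia.
apply: leq_trans (leq_mul (leqnn _) Nsd) _.
by rewrite mulnCA mulnA leq_mul2r; lia.
Qed.

Theorem theorem2 :
  exists k B0 : nat, 0 < k /\
  forall (h : heuristic) (N B : nat), B0 <= B -> B <= N ->
  exists G : net, size G = N /\ wf_net G /\
    exists (d : nat) (s : seq event),
      dtr_cost h G B = Some d /\ static_valid B G s /\
      N * static_cost G s <= k * B * d.
Proof.
exists 6, 2; split=> // h N B B2 BN.
set G := adv_final h N B.
have sizeG : size G = N := size_adv_final h N B.
exists G; split=> //; split; first exact/unary_wf_net/unary_adv_final.
have [st Est [_ _ _ cost_st]] := dtr_upto_adv_final h B2 BN (leqnn N).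
have LG : chain_len N <= size G by rewrite sizeG ltnW // (chain_len_lt B2 BN).
have GL := chain_with_queries_adv_final h B2 BN.
exists (cost st), (static_sched G (chain_len N)).
split; first by rewrite dtr_cost_upto sizeG Est.
split; first exact: static_sched_valid.
apply: leq_trans (leq_mul (leqnn N) (static_sched_cost LG GL)) _.
rewrite sizeG; apply: sq_le_cost cost_st; rewrite /chain_len ?ltn_ceil //; lia.
Qed.
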